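(* The essential set of a polyomino $A$ is empty if and only if $A$ has a SE-source.
   Context: A $(0,1)$-matrix is convex if in every row and every column the 1's occur consecutively; it is connected if it has no zero row or column and any two 1's are joined by a path of 1's with consecutive ones horizontally or vertically adjacent. A polyomino is a connected convex $(0,1)$-matrix. A SE-source of a $(0,1)$-matrix is a 1 from which every other 1 can be reached by a path of 1's in which each step goes from a 1 to the horizontally adjacent 1 to its east or the vertically adjacent 1 to its south. The diagram of an $m\times n$ $(0,1)$-matrix $A$: for each 1 of $A$ at $(i,j)$ shade all positions $(i,j')$, $j'\ge j$, and $(i',j)$, $i'\ge i$; the diagram is the set of unshaded positions. The essential set is the set of positions $(i,j)$ of the diagram such that neither $(i+1,j)$ nor $(i,j+1)$ lies in the diagram. *)

From mathcomp Require Import all_boot all_order all_algebra.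
Set Implicit Arguments. Unset Strict Implicit. Unset Printing Implicit Defensive.

Section Polyomino.
Variables (m n : nat).
Implicit Types (A : 'M[bool]_(m, n)).

Definition pos := ('I_m * 'I_n)%type.

Definition one A (p : pos) : bool := A p.1 p.2.

Definition convex A : Prop :=
  (forall (i : 'I_m) (j1 j j2 : 'I_n), j1 <= j <= j2 -> A i j1 -> A i j2 -> A i j) /\
  (forall (j : 'I_n) (i1 i i2 : 'I_m), i1 <= i <= i2 -> A i1 j -> A i2 j -> A i j).

Definition adjacent (p q : pos) : bool :=
  ((p.1 == q.1 :> nat) && ((p.2.+1 == q.2 :> nat) || (q.2.+1 == p.2 :> nat))) ||
  ((p.2 == q.2 :> nat) && ((p.1.+1 == q.1 :> nat) || (q.1.+1 == p.1 :> nat))).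

Definition step1 A : rel pos := fun p q => [&& one A p, one A q & adjacent p q].

Definition connected A : Prop :=
  (forall i : 'I_m, exists j : 'I_n, A i j) /\
  (forall j : 'I_n, exists i : 'I_m, A i j) /\
  (forall p q : pos, one A p -> one A q -> connect (step1 A) p q).

Definition polyomino A : Prop :=
  convex A /\ connected A /\ exists p : pos, one A p.

Definition se_step A : rel pos := fun p q =>
  [&& one A p, one A q &
     ((p.1 == q.1 :> nat) && (p.2.+1 == q.2 :> nat)) ||
     ((p.2 == q.2 :> nat) && (p.1.+1 == q.1 :> nat))].

Definition is_SE_source A (s : pos) : Prop :=
  one A s /\ forall p : pos, one A p -> connect (se_step A) s p.

Definition has_SE_source A : Prop := exists s : pos, is_SE_source A s.

Definition shaded A (i j : nat) : bool :=
  [exists i' : 'I_m, exists j' : 'I_n,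
     A i' j' && (((i' == i :> nat) && (j' <= j)) || ((j' == j :> nat) && (i' <= i)))].

Definition in_diagram A (i j : nat) : bool := [&& i < m, j < n & ~~ shaded A i j].

Definition diagram A : {set pos} := [set p : pos | in_diagram A p.1 p.2].

Definition essential_set A : {set pos} :=
  [set p : pos | [&& in_diagram A p.1 p.2, ~~ in_diagram A p.1.+1 p.2
                   & ~~ in_diagram A p.1 p.2.+1]].

End Polyomino.

(* The essential set is empty iff the diagram is, because a diagram position
   maximising i + j is essential; and the diagram is empty iff every position
   is shaded.

   If s is a SE-source and (i, j) a position, row i has a 1 at some (i, j0).
   If j0 <= j it shades (i, j). Otherwise s lies weakly west of column j (it
   reaches the 1's of column j), so the SE-path from s to (i, j0) crosses
   column j in a row at most i, and that 1 shades (i, j).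

   Conversely, if every position is shaded then (0, 0) is a 1, and every other
   1 has a 1 directly north or west of it; following these backwards gives
   SE-paths from (0, 0). Indeed, suppose the 1 at (i+1, j+1) has 0's at
   (i, j+1) and (i+1, j). By convexity these 0's are shaded by a 1 in column j
   above row i+1 and a 1 in row i left of column j+1; convexity then leaves no
   1 in column j below row i nor in row i right of column j, so no path of 1's
   leaves the quadrant south-east of (i, j), contradicting the connection to
   (0, 0). *)

From Pilot Require Import Defs.
From mathcomp Require Import all_boot all_order all_algebra.
From mathcomp Require Import zify.

Set Implicit Arguments. Unset Strict Implicit. Unset Printing Implicit Defensive.

(* Otherwise [one] resolves to [monoid.one]. *)
Local Notation one := Defs.one.

Lemma connect_stable (T : finType) (e : rel T) (a : pred T) x y :
  (forall u v, a u -> e u v -> a v) -> a x -> connect e x y -> a y.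
Proof.
move=> a_stable + /connectP[p e_p ->].
elim: p x e_p => //= z p IHp x /andP[e_xz e_p] a_x.
exact: IHp e_p (a_stable _ _ a_x e_xz).
Qed.

Lemma connect_from_root (T : finType) (e : rel T) (f : T -> nat) (a : pred T) r :
  (forall x y, e x y -> f x < f y) ->
  (forall x, a x -> x != r -> exists2 y, a y & e y x) ->
  forall x, a x -> connect e r x.
Proof.
move=> f_incr has_pred x; have [k] := ubnP (f x).
elim: k x => // k IHk x fx_le a_x.
have [-> | x_neq_r] := eqVneq x r; first exact: connect0.
have [y a_y e_yx] := has_pred x a_x x_neq_r.
exact: connect_trans (IHk y (leq_trans (f_incr _ _ e_yx) fx_le) a_y) (connect1 e_yx).
Qed.

Section Polyomino.
Variables (m n : nat) (A : 'M[bool]_(m, n)).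
Implicit Types (p q : pos m n) (i j : nat).

Definition entry i j : bool :=
  [exists p : pos m n, [&& p.1 == i :> nat, p.2 == j :> nat & one A p]].

Lemma entryP i j :
  reflect (exists2 p, one A p & (p.1 == i :> nat) && (p.2 == j :> nat)) (entry i j).
Proof.
apply: (iffP existsP) => [[p /and3P[p1 p2 Ap]] | [p Ap /andP[p1 p2]]]; exists p => //.
  by rewrite p1.
by rewrite p1 p2.
Qed.

Lemma entry_ord (i : 'I_m) (j : 'I_n) : entry i j = A i j.
Proof.
apply/entryP/idP => [[[i' j'] Ap /andP[/eqP/val_inj ei /eqP/val_inj ej]] | Aij].
  by rewrite -ei -ej.
by exists (i, j); rewrite ?eqxx.
Qed.

Lemma shadedP i j :
  reflect ((exists2 j', j' <= j & entry i j') \/ (exists2 i', i' <= i & entry i' j))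
          (shaded A i j).
Proof.
apply: (iffP existsP) => [[i' /existsP[j' /andP[Aij' /orP[]/andP[/eqP <- le]]]] | ].
- by left; exists j'; rewrite ?entry_ord.
- by right; exists i'; rewrite ?entry_ord.
case=> -[k le /entryP[p Ap /andP[/eqP p1 /eqP p2]]];
  exists p.1; apply/existsP; exists p.2; by rewrite [A _ _]Ap p1 p2 le ?eqxx ?orbT.
Qed.

Lemma diagram_eq0 : diagram A = set0 <-> forall i j, i < m -> j < n -> shaded A i j.
Proof.
split=> [dia0 i j lt_im lt_jn | shadedA].
  have := in_set0 (Ordinal lt_im, Ordinal lt_jn).
  by rewrite -dia0 inE /in_diagram /= lt_im lt_jn /= => /negbFE.
by apply/setP=> p; rewrite !inE /in_diagram shadedA ?andbF.
Qed.

Lemma essential_set_eq0 : essential_set A = set0 <-> diagram A = set0.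
Proof.
split=> [ess0 | dia0]; apply/setP=> p; rewrite in_set0; last first.
  by rewrite inE; have := in_set0 p; rewrite -dia0 inE => ->.
apply/negbTE/negP; rewrite inE => p_dia.
have [q q_dia q_max] :=
  arg_maxnP (P := fun q : pos m n => in_diagram A q.1 q.2) (fun q => q.1 + q.2) p_dia.
have beyond i j : in_diagram A i j -> i + j <= q.1 + q.2.
  by move=> D; have /and3P[lt_im lt_jn _] := D; apply: (q_max (Ordinal lt_im, Ordinal lt_jn)).
suff : q \in essential_set A by rewrite ess0 in_set0.
rewrite inE q_dia /=.
by apply/andP; split; apply/negP => /beyond; rewrite ?addSn ?addnS ltnn.
Qed.

Lemma se_connect_le x y : connect (se_step A) x y -> (x.1 <= y.1) && (x.2 <= y.2).
Proof.
apply: (connect_stable (a := fun q => (x.1 <= q.1) && (x.2 <= q.2))); last by rewrite !leqnn.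
by move=> u v /andP[le1 le2] /and3P[_ _ /orP[] /andP[/eqP e1 /eqP e2]]; apply/andP; lia.
Qed.

Lemma se_connect_column x y j : connect (se_step A) x y -> x.2 <= j < y.2 ->
  exists2 z, one A z & (z.2 == j :> nat) && (z.1 <= y.1).
Proof.
move=> xy /andP[le_xj lt_jy].
pose a q := (q.2 <= j) || [exists z, [&& one A z, z.2 == j :> nat & z.1 <= q.1]].
have a_stable u v : a u -> se_step A u v -> a v.
  move=> a_u /and3P[Au _ uv].
  have le_uv : u.1 <= v.1 by case/orP: uv => /andP[/eqP e1 /eqP e2]; lia.
  case/orP: a_u => [le_uj | /existsP[z /and3P[Az zj zu]]]; last first.
    by apply/orP; right; apply/existsP; exists z; rewrite Az zj (leq_trans zu).
  case/orP: uv => /andP[/eqP e1 /eqP e2]; apply/orP; last by left; rewrite -e1.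
  have [lt_uj | ge_uj] := ltnP u.2 j; first by left; rewrite -e2.
  by right; apply/existsP; exists u; rewrite Au e1 leqnn eqn_leq le_uj ge_uj.
have a_x : a x by rewrite /a le_xj.
have /orP[] := connect_stable a_stable a_x xy; first by rewrite leqNgt lt_jy.
by case/existsP=> z /and3P[Az zj zy]; exists z; rewrite // zj zy.
Qed.

Lemma shaded_of_SE_source :
  (forall i : 'I_m, exists j : 'I_n, A i j) -> (forall j : 'I_n, exists i : 'I_m, A i j) ->
  has_SE_source A -> forall i j, i < m -> j < n -> shaded A i j.
Proof.
move=> rowsA colsA [s [_ s_src]] i j lt_im lt_jn.
have [j0 Aij0] := rowsA (Ordinal lt_im).
have [i0 Ai0j] := colsA (Ordinal lt_jn).
have /andP[_ le_sj] := se_connect_le (s_src (i0, Ordinal lt_jn) Ai0j).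
apply/shadedP; have [le_j0j | lt_jj0] := leqP j0 j.
  by left; exists j0; rewrite // -[i]/(Ordinal lt_im : nat) entry_ord.
have le_sj_lt_j0 : s.2 <= j < j0 by rewrite le_sj.
have [z Az /andP[/eqP zj zi]] := se_connect_column (s_src (Ordinal lt_im, j0) Aij0) le_sj_lt_j0.
by right; exists z.1; rewrite // -zj entry_ord.
Qed.

Section Convex.
Hypothesis convexA : convex A.

Lemma entry_row_convex i j1 j j2 : j1 <= j <= j2 -> entry i j1 -> entry i j2 -> entry i j.
Proof.
move=> /andP[le1 le2] /entryP[p Ap /andP[/eqP p1 /eqP pj]].
move=> /entryP[q Aq /andP[/eqP q1 /eqP qj]].
have lt_jn : j < n by rewrite (leq_ltn_trans le2) // -qj.
have qp : q.1 = p.1 by apply: val_inj => /=; rewrite p1 q1.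
rewrite -p1 -[j]/(Ordinal lt_jn : nat) entry_ord.
by apply: convexA.1 p.2 _ q.2 _ Ap _; rewrite ?pj ?qj ?le1 -?qp.
Qed.

Lemma entry_col_convex j i1 i i2 : i1 <= i <= i2 -> entry i1 j -> entry i2 j -> entry i j.
Proof.
move=> /andP[le1 le2] /entryP[p Ap /andP[/eqP pi /eqP p2]].
move=> /entryP[q Aq /andP[/eqP qi /eqP q2]].
have lt_im : i < m by rewrite (leq_ltn_trans le2) // -qi.
have qp : q.2 = p.2 by apply: val_inj => /=; rewrite p2 q2.
rewrite -p2 -[i]/(Ordinal lt_im : nat) entry_ord.
by apply: convexA.2 p.1 _ q.1 _ Ap _; rewrite ?pi ?qi ?le1 -?qp.
Qed.

Lemma shaded_hole_col i j : shaded A i j -> entry i j.+1 -> ~~ entry i j ->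
  exists2 r, r < i & entry r j.
Proof.
move=> /shadedP[[j' le_j'j Aij'] | [r le_ri Arj]] Aij1 Aij.
  by case/negP: Aij; apply: entry_row_convex Aij' Aij1; rewrite le_j'j /=.
by exists r; rewrite // ltn_neqAle le_ri andbT; apply: contraNneq Aij => <-.
Qed.

Lemma shaded_hole_row i j : shaded A i j -> entry i.+1 j -> ~~ entry i j ->
  exists2 c, c < j & entry i c.
Proof.
move=> /shadedP[[c le_cj Aic] | [i' le_i'i Ai'j]] Ai1j Aij; last first.
  by case/negP: Aij; apply: entry_col_convex Ai'j Ai1j; rewrite le_i'i /=.
by exists c; rewrite // ltn_neqAle le_cj andbT; apply: contraNneq Aij => <-.
Qed.

Lemma quadrant_step_closed i j r c : r <= i -> entry r j -> c <= j -> entry i c ->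
  ~~ entry i.+1 j -> ~~ entry i j.+1 ->
  forall p q, (i < p.1) && (j < p.2) -> step1 A p q -> (i < q.1) && (j < q.2).
Proof.
move=> le_ri Arj le_cj Aic hole_S hole_E p q /andP[lt_ip lt_jp] /and3P[_ Aq adj].
have {}Aq : entry q.1 q.2 by rewrite entry_ord.
have west_wall k : i < k -> ~~ entry k j.
  by move=> lt_ik; apply: contra hole_S => Akj; apply: entry_col_convex Arj Akj; lia.
have north_wall k : j < k -> ~~ entry i k.
  by move=> lt_jk; apply: contra hole_E => Aik; apply: entry_row_convex Aic Aik; lia.
have [[e1 le_jq] | [e2 le_iq]] : (q.1 = p.1 :> nat /\ j <= q.2) \/ (q.2 = p.2 :> nat /\ i <= q.1).
  by move: adj; rewrite /adjacent => /orP[] /andP[/eqP ? /orP[] /eqP ?]; lia.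
- rewrite e1 lt_ip ltn_neqAle le_jq andbT.
  by apply: contraTneq Aq => <-; apply: west_wall; rewrite e1.
- rewrite e2 lt_jp andbT ltn_neqAle le_iq andbT.
  by apply: contraTneq Aq => <-; apply: north_wall; rewrite e2.
Qed.

Section AllShaded.
Hypothesis connA : forall p q, one A p -> one A q -> connect (step1 A) p q.
Hypothesis shadedA : forall i j, i < m -> j < n -> shaded A i j.

Lemma entry00 : 0 < m -> 0 < n -> entry 0 0.
Proof.
move=> m_gt0 n_gt0.
by case/shadedP: (shadedA m_gt0 n_gt0) => -[k]; rewrite leqn0 => /eqP ->.
Qed.

Lemma entry_north_or_west i j : entry i.+1 j.+1 -> entry i j.+1 || entry i.+1 j.
Proof.
move=> Aij; apply/norP => -[hole_N hole_W].
have /entryP[p Ap /andP[/eqP p1 /eqP p2]] := Aij.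
have lt_im : i.+1 < m by rewrite -p1.
have lt_jn : j.+1 < n by rewrite -p2.
have [r lt_ri Arj] := shaded_hole_col (shadedA lt_im (ltnW lt_jn)) Aij hole_W.
have [c lt_cj Aic] := shaded_hole_row (shadedA (ltnW lt_im) lt_jn) Aij hole_N.
have /entryP[o Ao /andP[/eqP o1 /eqP o2]] : entry 0 0 by apply: entry00; lia.
have quadrant_closed := quadrant_step_closed (i := i) (j := j) lt_ri Arj lt_cj Aic hole_W hole_N.
have := connect_stable (a := fun q => (i < q.1) && (j < q.2)) quadrant_closed _ (connA Ap Ao).
by rewrite p1 p2 o1 !ltnSn => /(_ isT).
Qed.

Lemma se_step_entry p i j : one A p -> entry i j ->
  (i == p.1 :> nat) && (j.+1 == p.2 :> nat) || (j == p.2 :> nat) && (i.+1 == p.1 :> nat) ->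
  exists2 q, one A q & se_step A q p.
Proof.
by move=> Ap /entryP[q Aq /andP[/eqP q1 /eqP q2]] qp; exists q; rewrite // /se_step Aq Ap q1 q2.
Qed.

Lemma one_se_predecessor p : one A p -> 0 < p.1 + p.2 -> exists2 q, one A q & se_step A q p.
Proof.
move=> Ap; have : entry p.1 p.2 by rewrite entry_ord.
case: p Ap => [[[|i] lt_im] [[|j] lt_jn]] Ap //= Aij _.
- have A00 : entry 0 0 by apply: entry00; lia.
  have A0j : entry 0 j by apply: (entry_row_convex _ A00 Aij); rewrite leqnSn.
  by apply: se_step_entry Ap A0j _; rewrite /= !eqxx.
- have A00 : entry 0 0 by apply: entry00; lia.
  have Ai0 : entry i 0 by apply: (entry_col_convex _ A00 Aij); rewrite leqnSn.
  by apply: se_step_entry Ap Ai0 _; rewrite /= !eqxx orbT.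
- by case/orP: (entry_north_or_west Aij) => A';
    apply: se_step_entry Ap A' _; rewrite /= !eqxx ?orbT.
Qed.

Lemma SE_source_of_shaded : (exists p, one A p) -> has_SE_source A.
Proof.
case=> p0 _; have m_gt0 : 0 < m by case: p0.1 => /= k; lia.
have n_gt0 : 0 < n by case: p0.2 => /= k; lia.
pose corner : pos m n := (Ordinal m_gt0, Ordinal n_gt0).
have A_corner : one A corner by rewrite /one -entry_ord entry00.
exists corner; split=> //.
have sum_incr u v : se_step A u v -> u.1 + u.2 < v.1 + v.2.
  by move=> /and3P[_ _ /orP[] /andP[/eqP e1 /eqP e2]]; lia.
apply: connect_from_root sum_incr _ => x Ax x_corner.
apply: one_se_predecessor Ax _; rewrite lt0n addn_eq0; apply: contra x_corner.
case: x => x1 x2 /andP[/eqP x1_0 /eqP x2_0].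
by apply/eqP; congr pair; apply: val_inj.
Qed.

End AllShaded.
End Convex.
End Polyomino.

Theorem mainTheorem3 (m n : nat) (A : 'M[bool]_(m, n)) :
  polyomino A -> (essential_set A = set0 <-> has_SE_source A).
Proof.
move=> [convexA [[rowsA [colsA connA]] nonempty]].
split=> [/essential_set_eq0/diagram_eq0 shadedA | srcA].
  exact: SE_source_of_shaded convexA connA shadedA nonempty.
by apply/essential_set_eq0/diagram_eq0; apply: shaded_of_SE_source rowsA colsA srcA.
Qed.
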